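(* Let $n\ge3$ be odd, $d,R\in\mathbb{Q}$, $d\ne0$, $R$ not a square, $D=d^2-R$, and fix a square root $\sqrt R\in\mathbb{C}$. Let $y,y'\in\mathbb{C}$ satisfy $y^n=d+\sqrt R$ and $y'^n=d-\sqrt R$, and put $z=yy'$ and $u=z^{(n-1)/2}(y+y')$ (so $z^n=D$ and $f_n(u,d,R)=0$). Then $$\{y,y'\}=\Big\{\,z^{(n+1)/2}\Big(\frac{u}{2D}+A(u)\sqrt R\Big),\ z^{(n+1)/2}\Big(\frac{u}{2D}-A(u)\sqrt R\Big)\Big\}.$$
   Context: For $k\ge1$, $F_k=\sum_{j=0}^{\lfloor k/2\rfloor}(-1)^j\frac{k}{k-j}\binom{k-j}{j}Z^{k-2j}$ (so $2\cos(kx)=F_k(2\cos x)$). $f_n(Z,d,R)=\sqrt D^{\,n}F_n(Z/\sqrt D)-2dD^{(n-1)/2}=\sum_{j=0}^{(n-1)/2}(-1)^j\frac{n}{n-j}\binom{n-j}{j}D^jZ^{n-2j}-2dD^{(n-1)/2}$. The polynomial $A\in\mathbb{Q}[Z]$ is $$A=\frac{1}{2R}\Big(F_{n-1}(Z/\sqrt D)-\frac{dZ}{D}\Big),\qquad F_{n-1}(Z/\sqrt D)=\sum_{j=0}^{(n-1)/2}(-1)^j\frac{n-1}{n-1-j}\binom{n-1-j}{j}D^{\,j-(n-1)/2}Z^{n-1-2j}.$$ *)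

From HB Require Import structures.
From mathcomp Require Import all_boot all_order all_algebra.
Set Implicit Arguments. Unset Strict Implicit. Unset Printing Implicit Defensive.
Import Order.TTheory GRing.Theory Num.Theory.
Local Open Scope ring_scope.

Definition Dval (d R : rat) : rat := d ^+ 2 - R.

(* coefficient (-1)^j * k/(k-j) * binom(k-j, j) of the Chebyshev-type
   polynomial F_k (so that 2 cos(kx) = F_k(2 cos x)) *)
Definition Fcoef (k j : nat) : rat :=
  (-1) ^+ j * ((k%:R : rat) / (k - j)%:R) * ('C(k - j, j))%:R.

(* F_{n-1}(Z/sqrt D) as an element of Q[Z], written out as in the paper:
   sum_{j=0}^{(n-1)/2} (-1)^j (n-1)/(n-1-j) C(n-1-j,j) D^{j-(n-1)/2} Z^{n-1-2j} *)
Definition Fnm1_scaled (n : nat) (d R : rat) : {poly rat} :=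
  \sum_(j < (n.-1)./2 .+1)
     (Fcoef n.-1 j * (Dval d R) ^- ((n.-1)./2 - j)) *: 'X^(n.-1 - 2 * j).

Definition Apoly (n : nat) (d R : rat) : {poly rat} :=
  (2 * R)^-1 *: (Fnm1_scaled n d R - (d / Dval d R) *: 'X).

From HB Require Import structures.
From mathcomp Require Import all_boot all_order all_algebra.
From mathcomp Require Import ring zify.
Import Order.TTheory GRing.Theory Num.Theory.
Local Open Scope ring_scope.

(* Proof of Proposition 1.  Write n = 2k + 1, P = y^k, P' = y'^k, so that
   z^k = P P', u = P P' (y + y'), y^n = y P^2 and y'^n = y' P'^2; then
   d = (y P^2 + y' P'^2)/2, sqrt R = (y P^2 - y' P'^2)/2 and D = z^n.
   The only non-algebraic input is the value of F_{n-1}(u / sqrt D):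
   rescaling each monomial by z^k turns the sum defining it into
   y^(n-1) + y'^(n-1) = P^2 + P'^2 (Lemma [Fnm1_scaled_power_sum]).  This
   power-sum identity is obtained from the Girard-type expansion
   h_k(y, y') = sum_j (-1)^j C(k-j, j) (y+y')^(k-2j) (y y')^j of the
   complete homogeneous symmetric polynomials ([hcomp]), via
   y^k + y'^k = h_k - y y' h_(k-2) and a binomial identity relating the
   coefficients k/(k-j) C(k-j, j) of F_k to those of h_k and h_(k-2).
   Once F_{n-1}(u / sqrt D) is known, both elements of the right-hand set
   are rational functions of y, y', P, P', and a field computation
   ([conjugate_root_formula]) identifies them with y' and y. *)

Section TwoVariableSymmetric.
Variables (K : comNzRingType) (s p : K).

Definition hterm (k j : nat) : K :=
  (-1) ^+ j * ('C(k - j, j))%:R * s ^+ (k - 2 * j) * p ^+ j.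

(* h_k(y, y') as a polynomial in s and p. *)
Definition hcomp (k : nat) : K := \sum_(j < k.+1) hterm k j.

Lemma hterm_small k j : (k < 2 * j)%N -> hterm k j = 0.
Proof. by move=> hkj; rewrite /hterm bin_small ?mulr0 ?mul0r //; lia. Qed.

Lemma hterm_sum_trunc k M N : (M <= N)%N -> (k < 2 * M)%N ->
  \sum_(j < N) hterm k j = \sum_(j < M) hterm k j.
Proof.
move=> hMN hk; rewrite -(subnKC hMN) big_split_ord /=.
by rewrite [X in _ + X]big1 ?addr0 // => i _; apply: hterm_small; lia.
Qed.

Lemma hcompE k N : (k < 2 * N)%N -> hcomp k = \sum_(j < N) hterm k j.
Proof.
move=> hk; rewrite /hcomp -(@hterm_sum_trunc k k.+1 (k.+1 + N)); try lia.
by rewrite (@hterm_sum_trunc k N (k.+1 + N)) //; lia.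
Qed.

(* Pascal's rule for the terms, giving the three-term recurrence below. *)
Lemma hterm_rec k j : hterm k.+2 j.+1 = s * hterm k.+1 j.+1 - p * hterm k j.
Proof.
rewrite /hterm; have [hjk|hjk] := leqP j k; last first.
  rewrite (@bin_small (k.+2 - j.+1)) 1?(@bin_small (k.+1 - j.+1)); try lia.
  by rewrite (@bin_small (k - j)) ?(mulr0, mul0r, subr0) //; lia.
have -> : (k.+2 - j.+1 = (k - j).+1)%N by lia.
have -> : (k.+1 - j.+1 = k - j)%N by lia.
have -> : (k.+2 - 2 * j.+1 = k - 2 * j)%N by lia.
rewrite binS natrD; have [hlt|hge] := ltnP (2 * j) k.
  have -> : (k - 2 * j = (k.+1 - 2 * j.+1).+1)%N by lia.
  by rewrite !exprS; ring.
by rewrite (@bin_small (k - j)); [rewrite !exprS; ring | lia].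
Qed.

Lemma hcomp_rec k : hcomp k.+2 = s * hcomp k.+1 - p * hcomp k.
Proof.
rewrite (@hcompE k.+2 k.+3) ?(@hcompE k.+1 k.+3) ?(@hcompE k k.+3); try lia.
rewrite big_ord_recl [in X in _ - p * X]big_ord_recr /=.
rewrite [in X in s * X]big_ord_recl /= (@hterm_small k k.+2); last by lia.
rewrite addr0 mulrDr !mulr_sumr -addrA -sumrB; congr (_ + _).
  by rewrite /hterm !subn0 !expr0 !bin0 !mulr1 !mul1r exprS.
by apply: eq_bigr => i _; rewrite /bump leq0n add1n hterm_rec.
Qed.

Lemma hcomp0 : hcomp 0 = 1.
Proof. by rewrite /hcomp big_ord1 /hterm /= !expr0 bin0 !mulr1. Qed.

Lemma hcomp1 : hcomp 1 = s.
Proof.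
rewrite /hcomp !big_ord_recr big_ord0 /= /hterm /= add0r.
by rewrite bin0 bin0n !expr0 !mulr0 !mul0r addr0 !mulr1 mul1r expr1.
Qed.

End TwoVariableSymmetric.

Arguments hcomp {K}.
Arguments hterm {K}.
Arguments hcomp_rec {K}.

(* Power sums from complete symmetric polynomials:
   y^(k+2) + y'^(k+2) = h_(k+2) - y y' h_k, both sides obeying the same
   recurrence with the same two initial values. *)
Lemma power_sum_hcomp (K : comNzRingType) (y y' : K) k :
  hcomp (y + y') (y * y') k.+2 - y * y' * hcomp (y + y') (y * y') k
  = y ^+ k.+2 + y' ^+ k.+2.
Proof.
set s := y + y'; set p := y * y'.
suff pair_step i : (hcomp s p i.+2 - p * hcomp s p i = y ^+ i.+2 + y' ^+ i.+2) /\
    (hcomp s p i.+3 - p * hcomp s p i.+1 = y ^+ i.+3 + y' ^+ i.+3).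
  by case: (pair_step k).
elim: i => [|i [IH1 IH2]].
  by rewrite !hcomp_rec hcomp1 hcomp0 /s /p; split; ring.
split=> //.
have -> : hcomp s p i.+4 - p * hcomp s p i.+2 =
    s * (hcomp s p i.+3 - p * hcomp s p i.+1) - p * (hcomp s p i.+2 - p * hcomp s p i).
  by rewrite (hcomp_rec s p i.+2) (hcomp_rec s p i); ring.
by rewrite IH1 IH2 /s /p !exprS; ring.
Qed.

Lemma Fcoef0 k : (0 < k)%N -> Fcoef k 0 = 1.
Proof.
move=> hk; rewrite /Fcoef expr0 mul1r subn0 bin0 mulr1 divff //.
by rewrite pnatr_eq0 -lt0n.
Qed.

Lemma Fcoef_succ k j : (j.+1 < k)%N ->
  Fcoef k j.+1 = (-1) ^+ j.+1 * ('C(k - j.+1, j.+1) + 'C(k - 2 - j, j))%:R.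
Proof.
move=> hjk; rewrite /Fcoef -mulrA; congr (_ * _).
set N := (k - j.+1)%N.
have hN : (N%:R : rat) != 0 by rewrite pnatr_eq0 /N; lia.
have -> : (k - 2 - j = N.-1)%N by rewrite /N; lia.
have key : (k * 'C(N, j.+1) = N * ('C(N, j.+1) + 'C(N.-1, j)))%N.
  have -> : k = (N + j.+1)%N by rewrite /N; lia.
  by rewrite mulnDr mulnDl (mul_bin_diag N j); lia.
apply: (mulfI hN); rewrite mulrA mulrCA mulrA mulfK // -!natrM key.
by rewrite natrM.
Qed.

(* Rescaling one monomial of F_{2M}(Z / sqrt D) at Z = z^M e, with D = z^(2M+1). *)
Lemma scaled_monomial (F : fieldType) (z e : F) M j : z != 0 -> (j <= M)%N ->
  z ^+ M * ((z ^+ (2 * M).+1) ^- (M - j) * (z ^+ M * e) ^+ (2 * M - 2 * j))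
  = e ^+ (2 * M - 2 * j) * z ^+ j.
Proof.
move=> hz hj; have [t ->] : exists t, M = (j + t)%N by exists (M - j)%N; lia.
have -> : (j + t - j = t)%N by lia.
have -> : (2 * (j + t) - 2 * j = 2 * t)%N by lia.
have -> : (z ^+ (2 * (j + t)).+1) ^+ t = (z ^+ (j + t)) ^+ (2 * t) * z ^+ t.
  by rewrite -!exprM -exprD; congr (z ^+ _); lia.
rewrite exprMn [z ^+ (j + t)]exprD.
have hW : (z ^+ (j + t)) ^+ (2 * t) != 0 by rewrite !expf_neq0.
have hT : z ^+ t != 0 by rewrite expf_neq0.
move: hW; set W := (z ^+ (j + t)) ^+ (2 * t) => hW.
by field; rewrite hT expf_neq0 // mulf_neq0 // expf_neq0.
Qed.

Lemma horner_Apoly (C : numFieldType) n d R (v : C) :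
  (map_poly ratr (Apoly n d R)).[v] =
  ratr ((2 * R)^-1) * ((map_poly ratr (Fnm1_scaled n d R)).[v] - ratr (d / Dval d R) * v).
Proof.
rewrite /Apoly (map_polyZ (ratr : rat -> C)) hornerZ rmorphB /=.
by rewrite (map_polyZ (ratr : rat -> C)) map_polyX hornerD hornerN hornerZ hornerX.
Qed.

Lemma scaled_Fnm1_hcomp (C : numFieldType) m d R (z s : C) :
  z != 0 -> ratr (Dval d R) = z ^+ (2 * m.+1).+1 ->
  z ^+ m.+1 * (map_poly ratr (Fnm1_scaled (2 * m.+1).+1 d R)).[z ^+ m.+1 * s]
  = hcomp s z (2 * m.+1) - z * hcomp s z (2 * m).
Proof.
move=> hz hD.
have half : ((2 * m.+1)./2 = m.+1)%N by rewrite mul2n doubleK.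
rewrite /Fnm1_scaled (_ : ((2 * m.+1).+1.-1 = 2 * m.+1)%N) // half.
rewrite rmorph_sum horner_sum mulr_sumr.
under eq_bigr => j _.
  rewrite /= (map_polyZ (ratr : rat -> C)) map_polyXn hornerZ hornerXn.
  rewrite rmorphM fmorphV rmorphXn /= hD.
  rewrite -mulrA mulrCA (@scaled_monomial _ z s m.+1 j hz); last by rewrite -ltnS.
  over.
rewrite (@hcompE _ _ _ (2 * m.+1) m.+2); last by lia.
rewrite (@hcompE _ _ _ (2 * m) m.+1); last by lia.
rewrite big_ord_recl [X in _ = X - _]big_ord_recl mulr_sumr -addrA -sumrB /=.
congr (_ + _).
  by rewrite Fcoef0 // rmorph1 mul1r /hterm !expr0 subn0 bin0 !mulr1 mul1r.
apply: eq_bigr => j _; rewrite /bump leq0n add1n Fcoef_succ; last by have := ltn_ord j; lia.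
rewrite rmorphM rmorphXn rmorphN1 /= ratr_nat natrD /hterm.
have -> : (2 * m.+1 - 2 - j = 2 * m - j)%N by lia.
have -> : (2 * m.+1 - 2 * j.+1 = 2 * m - 2 * j)%N by lia.
by rewrite !exprS; ring.
Qed.

Lemma Fnm1_scaled_power_sum (C : numFieldType) m d R (y y' : C) :
  y * y' != 0 -> ratr (Dval d R) = (y * y') ^+ (2 * m.+1).+1 ->
  (y * y') ^+ m.+1 *
    (map_poly ratr (Fnm1_scaled (2 * m.+1).+1 d R)).[(y * y') ^+ m.+1 * (y + y')]
  = y ^+ (2 * m.+1) + y' ^+ (2 * m.+1).
Proof.
move=> hz hD; rewrite scaled_Fnm1_hcomp //.
have -> : (2 * m.+1 = (2 * m).+2)%N by lia.
exact: power_sum_hcomp.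
Qed.

(* The final field computation: with d = (y p^2 + y' q^2)/2,
   r = (y p^2 - y' q^2)/2 (playing sqrt R), D = y y' (p q)^2 and
   F = (p^2 + q^2)/(p q), the two candidate values are y' and y. *)
Lemma conjugate_root_formula (F : numFieldType) (y y' p q r d D Fu : F) :
  y != 0 -> y' != 0 -> p != 0 -> q != 0 -> r != 0 ->
  2 * r = y * p ^+ 2 - y' * q ^+ 2 -> 2 * d = y * p ^+ 2 + y' * q ^+ 2 ->
  D = y * y' * (p * q) ^+ 2 -> Fu * (p * q) = p ^+ 2 + q ^+ 2 ->
  let u := p * q * (y + y') in
  let a := (2 * r ^+ 2)^-1 * (Fu - d / D * u) in
  y * y' * (p * q) * (u / (2 * D) + a * r) = y' /\
  y * y' * (p * q) * (u / (2 * D) - a * r) = y.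
Proof.
move=> hy hy' hp hq hr er ed -> eF u a; rewrite {}/a {}/u.
have two0 : (2 : F) != 0 by rewrite pnatr_eq0.
have -> : d = (y * p ^+ 2 + y' * q ^+ 2) / 2 by rewrite -ed; field.
have -> : Fu = (p ^+ 2 + q ^+ 2) / (p * q) by rewrite -eF; field; rewrite hp hq.
have ediff : y * p ^+ 2 - y' * q ^+ 2 != 0 by rewrite -er mulf_neq0.
have -> : r = (y * p ^+ 2 - y' * q ^+ 2) / 2 by rewrite -er; field.
by split; field; rewrite hy hy' hp hq ediff.
Qed.

Lemma odd_ge3_shape n : (3 <= n)%N -> odd n -> exists m, n = (2 * m.+1).+1.
Proof.
by move=> h3 hodd; exists (n./2).-1; have := odd_double_half n; rewrite hodd -mul2n; lia.
Qed.

Lemma halves_odd m :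
  ((2 * m.+1).+1.-1./2 = m.+1)%N /\ ((2 * m.+1).+2./2 = m.+2)%N.
Proof.
split; first by rewrite (_ : ((2 * m.+1).+1.-1 = 2 * m.+1)%N) // mul2n doubleK.
by rewrite (_ : ((2 * m.+1).+2 = 2 * m.+2)%N) ?mul2n ?doubleK //; lia.
Qed.

Lemma nonsquare_nonzero d R : (forall q : rat, q ^+ 2 != R) ->
  R != 0 /\ Dval d R != 0.
Proof.
move=> hR; split; first by have := hR 0; rewrite expr0n eq_sym.
by apply: contra_neq (hR d); rewrite /Dval => /eqP; rewrite subr_eq0 => /eqP.
Qed.

Lemma norm_pow (C : numFieldType) n d R (r y y' : C) :
  r ^+ 2 = ratr R -> y ^+ n = ratr d + r -> y' ^+ n = ratr d - r ->
  (y * y') ^+ n = ratr (Dval d R).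
Proof.
by move=> hr hy hy'; rewrite exprMn hy hy' /Dval rmorphB rmorphXn /= -hr; ring.
Qed.

Lemma root_ratr_neq0 (C : numFieldType) (t : C) k (q : rat) :
  q != 0 -> t ^+ k.+1 = ratr q -> t != 0.
Proof.
move=> hq ht; apply: contra_neq hq => t0; apply/eqP.
by rewrite -(fmorph_eq0 (@ratr C)) /= -ht t0 expr0n.
Qed.

Theorem proposition1 (C : numClosedFieldType) (n : nat) (d R : rat)
    (sqrtR y y' : C) :
  (3 <= n)%N -> odd n ->
  d != 0 -> (forall q : rat, q ^+ 2 != R) ->
  sqrtR ^+ 2 = ratr R ->
  y ^+ n = ratr d + sqrtR -> y' ^+ n = ratr d - sqrtR ->
  let D := Dval d R in
  let z := y * y' in
  let u := z ^+ (n.-1)./2 * (y + y') in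
  let a := (map_poly ratr (Apoly n d R)).[u] in
  let w1 := z ^+ (n.+1)./2 * (u / ratr (2 * D) + a * sqrtR) in
  let w2 := z ^+ (n.+1)./2 * (u / ratr (2 * D) - a * sqrtR) in
  forall x : C, (x \in [:: y; y']) = (x \in [:: w1; w2]).
Proof.
move=> h3 hodd _ hR hsR hy hy' D z u a w1 w2 x.
have [m hm] := odd_ge3_shape n h3 hodd; subst n.
have [half1 half2] := halves_odd m.
have [hR0 hD0] := nonsquare_nonzero d R hR.
have hzn : z ^+ (2 * m.+1).+1 = ratr D := @norm_pow C _ d R sqrtR y y' hsR hy hy'.
have hz0 : z != 0 := @root_ratr_neq0 C z _ D hD0 hzn.
have hsR0 : sqrtR != 0 := @root_ratr_neq0 C sqrtR 1 R hR0 hsR.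
have [hy0 hy'0] : y != 0 /\ y' != 0 by apply/andP; rewrite -negb_or -mulf_eq0.
set P := y ^+ m.+1; set P' := y' ^+ m.+1.
have [hP0 hP'0] : P != 0 /\ P' != 0 by rewrite !expf_neq0.
have odd_pow (t : C) : t ^+ (2 * m.+1).+1 = t * (t ^+ m.+1) ^+ 2.
  by rewrite exprS -exprM mulnC.
have hzm : z ^+ m.+1 = P * P' by rewrite exprMn.
have hFu := @Fnm1_scaled_power_sum _ m d R y y' hz0 (esym hzn).
set Fu := (map_poly _ _).[_] in hFu.
rewrite -/z hzm mulnC !exprM -/P -/P' mulrC in hFu.
have e2r : 2 * sqrtR = y * P ^+ 2 - y' * P' ^+ 2 by rewrite -!odd_pow hy hy'; ring.
have e2d : 2 * ratr d = y * P ^+ 2 + y' * P' ^+ 2 by rewrite -!odd_pow hy hy'; ring.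
have eD : ratr D = y * y' * (P * P') ^+ 2 by rewrite -hzn odd_pow hzm.
have [hw1 hw2] := @conjugate_root_formula _ y y' P P' sqrtR (ratr d) (ratr D) Fu
  hy0 hy'0 hP0 hP'0 hsR0 e2r e2d eD hFu.
have -> : w1 = y'.
  rewrite /w1 /a /u half1 half2 horner_Apoly -/Fu exprS hzm.
  by rewrite !(rmorphM, fmorphV) /= ratr_nat -hsR.
have -> : w2 = y.
  rewrite /w2 /a /u half1 half2 horner_Apoly -/Fu exprS hzm.
  by rewrite !(rmorphM, fmorphV) /= ratr_nat -hsR.
by rewrite !inE orbC.
Qed.
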